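(* Let $S\subset\mathbb{C}^4$ be the surface parametrized by $(a,t)\mapsto(a,t^4,at^6,t^7)$. Then $S$ is Whitney regular along its singular locus (the first coordinate axis). However, the surface parametrized by $\tau(a,t)=(a,t^4,at^2,t^3)$ (which is the blow-up of $S$ along its singular locus) and the surface parametrized by $\sigma(a,t)=(a,t^4,\tfrac32at^2,\tfrac74t^3)$ (which is the Nash modification of $S$) are not Whitney regular along their singular locus, the first coordinate axis.
   Context: Whitney regularity along the singular locus $\mathcal{C}$ at $0$: for all sequences $x_n\in S\setminus\mathcal{C}$, $y_n\in\mathcal{C}\setminus\{0\}$ converging to $0$ with secants $\overline{x_ny_n}\to l$ and tangent planes $T_{x_n}S\to T$, one has $T_0\mathcal{C}\subset T$ and $l\subset T$. *)

From Stdlib Require Import Reals.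
Open Scope R_scope.

Record C := mkC { Re : R; Im : R }.
Definition C0 : C := mkC 0 0.
Definition C1 : C := mkC 1 0.
Definition RtoC (r : R) : C := mkC r 0.
Definition Cadd (z w : C) : C := mkC (Re z + Re w) (Im z + Im w).
Definition Copp (z : C) : C := mkC (- Re z) (- Im z).
Definition Csub (z w : C) : C := Cadd z (Copp w).
Definition Cmul (z w : C) : C :=
  mkC (Re z * Re w - Im z * Im w) (Re z * Im w + Im z * Re w).
Definition Cnorm2 (z : C) : R := Re z * Re z + Im z * Im z.
Definition Cinv (z : C) : C := mkC (Re z / Cnorm2 z) (- Im z / Cnorm2 z).
Fixpoint Cpow (z : C) (n : nat) : C :=
  match n with O => C1 | S m => Cmul z (Cpow z m) end.

Record V4 := mkV4 { v1 : C; v2 : C; v3 : C; v4 : C }.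
Definition V0 : V4 := mkV4 C0 C0 C0 C0.
Definition vadd (x y : V4) : V4 :=
  mkV4 (Cadd (v1 x) (v1 y)) (Cadd (v2 x) (v2 y)) (Cadd (v3 x) (v3 y)) (Cadd (v4 x) (v4 y)).
Definition vscale (c : C) (x : V4) : V4 :=
  mkV4 (Cmul c (v1 x)) (Cmul c (v2 x)) (Cmul c (v3 x)) (Cmul c (v4 x)).
Definition vsub (x y : V4) : V4 := vadd x (vscale (Copp C1) y).
Definition vnorm2 (x : V4) : R :=
  Cnorm2 (v1 x) + Cnorm2 (v2 x) + Cnorm2 (v3 x) + Cnorm2 (v4 x).

Definition vconv (u : nat -> V4) (l : V4) : Prop :=
  forall eps, 0 < eps -> exists N : nat, forall n, (N <= n)%nat -> vnorm2 (vsub (u n) l) < eps.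

Definition in_span2 (e f z : V4) : Prop :=
  exists al be : C, z = vadd (vscale al e) (vscale be f).
Definition lin_indep2 (e f : V4) : Prop :=
  forall al be : C, vadd (vscale al e) (vscale be f) = V0 -> al = C0 /\ be = C0.

Definition has_pderiv_a (phi : C -> C -> V4) (a t : C) (d : V4) : Prop :=
  forall eps, 0 < eps -> exists delta, 0 < delta /\
    forall h, h <> C0 -> Cnorm2 h < delta ->
      vnorm2 (vsub (vscale (Cinv h) (vsub (phi (Cadd a h) t) (phi a t))) d) < eps.
Definition has_pderiv_t (phi : C -> C -> V4) (a t : C) (d : V4) : Prop :=
  forall eps, 0 < eps -> exists delta, 0 < delta /\
    forall h, h <> C0 -> Cnorm2 h < delta ->
      vnorm2 (vsub (vscale (Cinv h) (vsub (phi a (Cadd t h)) (phi a t))) d) < eps.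

Definition tangent_plane (phi : C -> C -> V4) (a t : C) (z : V4) : Prop :=
  exists da dt, has_pderiv_a phi a t da /\ has_pderiv_t phi a t dt /\ in_span2 da dt z.

Definition on_axis (x : V4) : Prop := v2 x = C0 /\ v3 x = C0 /\ v4 x = C0.
Definition e1 : V4 := mkV4 C1 C0 C0 C0.

(** Points x_n of S \ C are written x_n = phi (a n) (t n).
    The limit secant line l is represented by a nonzero vector v (l = C v), and
    secants converge to l iff suitable representatives c_n (x_n - y_n) converge to v.
    The limit plane T is represented by a basis (e,f), and T_{x_n}S converge to T
    iff there are bases (P n, Q n) of T_{x_n}S converging to (e,f). *)
Definition whitney_at (phi : C -> C -> V4) (p : V4) : Prop :=
  forall (a t : nat -> C) (y : nat -> V4) (c : nat -> C) (v e f : V4) (P Q : nat -> V4),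
    (forall n, ~ on_axis (phi (a n) (t n))) ->
    (forall n, on_axis (y n) /\ y n <> p) ->
    vconv (fun n => phi (a n) (t n)) p ->
    vconv y p ->
    v <> V0 ->
    vconv (fun n => vscale (c n) (vsub (phi (a n) (t n)) (y n))) v ->
    lin_indep2 e f ->
    (forall n z, tangent_plane phi (a n) (t n) z <-> in_span2 (P n) (Q n) z) ->
    vconv P e -> vconv Q f ->
    (* T_p C = C e1 is contained in T, and l is contained in T *)
    in_span2 e f e1 /\ in_span2 e f v.

Definition whitney_along_axis (phi : C -> C -> V4) : Prop :=
  forall p, on_axis p -> whitney_at phi p.

Definition phiS (a t : C) : V4 := mkV4 a (Cpow t 4) (Cmul a (Cpow t 6)) (Cpow t 7).
Definition phiTau (a t : C) : V4 := mkV4 a (Cpow t 4) (Cmul a (Cpow t 2)) (Cpow t 3).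
Definition phiSigma (a t : C) : V4 :=
  mkV4 a (Cpow t 4) (Cmul (RtoC (3/2)) (Cmul a (Cpow t 2))) (Cmul (RtoC (7/4)) (Cpow t 3)).

(* On S, off the axis (t <> 0), the tangent plane is spanned by
   (1, 0, t^6, 0) and t^-3 d/dt = (0, 4, 6 a t^2, 7 t^3).  Points tending to the axis have
   t -> 0 with a bounded, so every limit plane contains e1 and e2.  A secant from x to the
   axis has third and fourth coordinates equal to its second one times a t^2 and t^3, so
   every limit secant lies in span(e1, e2) as well.
   Both tau and sigma are of the form (a, t^4, al a t^2, be t^3) with al, be <> 0.  Along
   a = t = 1/(n+1) the tangent planes, spanned by (1, 0, al t^2, 0) and
   t^-2 d/dt = (0, 4 t, 2 al, 3 be), tend to span(e1, (0, 0, 2 al, 3 be)), while the secants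
   to (t, 0, 0, 0), rescaled by t^-3, tend to (0, 0, al, be), which is not in that plane. *)

From Stdlib Require Import Reals Lra Lia Classical FunctionalExtensionality.
From Coquelicot Require Import Rbar Lim_seq.
Open Scope R_scope.

Lemma C_ext z w : Re z = Re w -> Im z = Im w -> z = w.
Proof. destruct z, w; simpl; intros; subst; reflexivity. Qed.

Lemma V4_ext x y : v1 x = v1 y -> v2 x = v2 y -> v3 x = v3 y -> v4 x = v4 y -> x = y.
Proof. destruct x, y; simpl; intros; subst; reflexivity. Qed.

Lemma Cnorm2_nonneg z : 0 <= Cnorm2 z.
Proof. unfold Cnorm2; nra. Qed.

Lemma Cnorm2_eq0 z : Cnorm2 z = 0 -> z = C0.
Proof. unfold Cnorm2; intros; apply C_ext; simpl; nra. Qed.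

Lemma Cnorm2_pos z : z <> C0 -> 0 < Cnorm2 z.
Proof.
  intros Hz; destruct (Cnorm2_nonneg z) as [Hlt | Heq]; [exact Hlt |].
  exfalso; apply Hz, Cnorm2_eq0; auto.
Qed.

Lemma Cnorm2_mul z w : Cnorm2 (Cmul z w) = Cnorm2 z * Cnorm2 w.
Proof. unfold Cnorm2; simpl; ring. Qed.

Lemma Cnorm2_add z w : Cnorm2 (Cadd z w) <= 2 * Cnorm2 z + 2 * Cnorm2 w.
Proof.
  unfold Cnorm2; simpl.
  pose proof (Rle_0_sqr (Re z - Re w)); pose proof (Rle_0_sqr (Im z - Im w)); unfold Rsqr in *; lra.
Qed.

Lemma Cnorm2_pow z k : Cnorm2 (Cpow z k) = Cnorm2 z ^ k.
Proof. induction k; simpl; [unfold Cnorm2; simpl; ring | rewrite Cnorm2_mul, IHk; ring]. Qed.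

Lemma C1_neq_C0 : C1 <> C0.
Proof. intro E; apply (f_equal Re) in E; simpl in E; lra. Qed.

Lemma Cinv_l z : z <> C0 -> Cmul (Cinv z) z = C1.
Proof.
  intros Hz; pose proof (Cnorm2_pos z Hz) as Hn; unfold Cnorm2 in Hn.
  apply C_ext; simpl; unfold Cnorm2; field; lra.
Qed.

Lemma C_field_theory :
  field_theory C0 C1 Cadd Cmul Csub Copp (fun z w => Cmul z (Cinv w)) Cinv (@eq C).
Proof.
  constructor; [constructor | exact C1_neq_C0 | reflexivity | exact Cinv_l];
    intros; apply C_ext; simpl; ring.
Qed.

Add Field C_field : C_field_theory.

Lemma Cmul_eq0 z w : Cmul z w = C0 -> z = C0 \/ w = C0.
Proof.
  intros E; apply (f_equal Cnorm2) in E; rewrite Cnorm2_mul in E.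
  replace (Cnorm2 C0) with 0 in E by (unfold Cnorm2; simpl; ring).
  destruct (Rmult_integral _ _ E); [left | right]; apply Cnorm2_eq0; assumption.
Qed.

Lemma Cpow_neq0 z k : z <> C0 -> Cpow z k <> C0.
Proof.
  intros Hz; induction k as [| k IH]; simpl; [exact C1_neq_C0 |].
  intros E; destruct (Cmul_eq0 _ _ E); auto.
Qed.

Lemma Cinv_neq0 z : z <> C0 -> Cinv z <> C0.
Proof. intros Hz E; apply C1_neq_C0; rewrite <- (Cinv_l z Hz), E; field. Qed.

Lemma RtoC_neq0 r : r <> 0 -> RtoC r <> C0.
Proof. intros Hr E; apply Hr, (f_equal Re E). Qed.

Definition Cnat (n : nat) : C := RtoC (INR n).

Lemma Cnat_S n : Cnat (S n) = Cadd (Cnat n) C1.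
Proof. apply C_ext; cbn [Cnat RtoC Cadd C1 Re Im]; [rewrite S_INR |]; ring. Qed.

Lemma Cnat_neq0 n : n <> 0%nat -> Cnat n <> C0.
Proof. intros Hn E; apply (f_equal Re) in E; apply (not_0_INR n Hn), E. Qed.

Lemma vnorm2_nonneg x : 0 <= vnorm2 x.
Proof.
  unfold vnorm2; pose proof (Cnorm2_nonneg (v1 x)); pose proof (Cnorm2_nonneg (v2 x));
    pose proof (Cnorm2_nonneg (v3 x)); pose proof (Cnorm2_nonneg (v4 x)); lra.
Qed.

Lemma vnorm2_eq0 x : vnorm2 x = 0 -> x = V0.
Proof.
  unfold vnorm2; intros; pose proof (Cnorm2_nonneg (v1 x)); pose proof (Cnorm2_nonneg (v2 x));
    pose proof (Cnorm2_nonneg (v3 x)); pose proof (Cnorm2_nonneg (v4 x));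
    apply V4_ext; apply Cnorm2_eq0; lra.
Qed.

Lemma vnorm2_add x y : vnorm2 (vadd x y) <= 2 * vnorm2 x + 2 * vnorm2 y.
Proof.
  unfold vnorm2; simpl;
    pose proof (Cnorm2_add (v1 x) (v1 y)); pose proof (Cnorm2_add (v2 x) (v2 y));
    pose proof (Cnorm2_add (v3 x) (v3 y)); pose proof (Cnorm2_add (v4 x) (v4 y)); lra.
Qed.

Lemma vnorm2_scale c x : vnorm2 (vscale c x) = Cnorm2 c * vnorm2 x.
Proof. unfold vnorm2; simpl; rewrite !Cnorm2_mul; ring. Qed.

Lemma vnorm2_sub x y : vnorm2 (vsub x y) =
  Cnorm2 (Csub (v1 x) (v1 y)) + Cnorm2 (Csub (v2 x) (v2 y))
  + Cnorm2 (Csub (v3 x) (v3 y)) + Cnorm2 (Csub (v4 x) (v4 y)).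
Proof. unfold vnorm2, Cnorm2; simpl; ring. Qed.

Ltac vfield := apply V4_ext; cbn [v1 v2 v3 v4 vadd vsub vscale V0 e1 Cpow]; field.

Definition cconv (u : nat -> C) (l : C) : Prop :=
  is_lim_seq (fun n => Re (u n)) (Re l) /\ is_lim_seq (fun n => Im (u n)) (Im l).

Lemma cconv_const c : cconv (fun _ => c) c.
Proof. split; apply is_lim_seq_const. Qed.

Lemma cconv_add u w l m : cconv u l -> cconv w m -> cconv (fun n => Cadd (u n) (w n)) (Cadd l m).
Proof. intros [] []; split; simpl; apply is_lim_seq_plus'; assumption. Qed.

Lemma cconv_opp u l : cconv u l -> cconv (fun n => Copp (u n)) (Copp l).
Proof.
  intros [HRe HIm]; split; simpl;
    [apply (is_lim_seq_opp _ (Re l)) | apply (is_lim_seq_opp _ (Im l))]; assumption.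
Qed.

Lemma cconv_mul u w l m : cconv u l -> cconv w m -> cconv (fun n => Cmul (u n) (w n)) (Cmul l m).
Proof.
  intros [] []; split; simpl;
    [apply is_lim_seq_minus' | apply is_lim_seq_plus']; apply is_lim_seq_mult'; assumption.
Qed.

Lemma cconv_pow u l k : cconv u l -> cconv (fun n => Cpow (u n) k) (Cpow l k).
Proof. intros Hu; induction k; simpl; [apply cconv_const | apply cconv_mul; assumption]. Qed.

Lemma cconv_inv u l : cconv u l -> l <> C0 -> cconv (fun n => Cinv (u n)) (Cinv l).
Proof.
  intros [HRe HIm] Hl; pose proof (Cnorm2_pos l Hl) as Hn.
  assert (Hnorm : is_lim_seq (fun n => Cnorm2 (u n)) (Cnorm2 l)).
  { unfold Cnorm2; apply is_lim_seq_plus'; apply is_lim_seq_mult'; assumption. }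
  split; simpl; apply is_lim_seq_div'; try assumption; try lra.
  apply (is_lim_seq_opp _ (Im l)); assumption.
Qed.

Lemma cconv_ext_ev u w l :
  (exists N, forall n, (N <= n)%nat -> u n = w n) -> cconv u l -> cconv w l.
Proof.
  intros [N E] [HRe HIm]; split;
    [apply (is_lim_seq_ext_loc (fun n => Re (u n))) | apply (is_lim_seq_ext_loc (fun n => Im (u n)))];
    try assumption; exists N; intros n Hn; rewrite E; auto.
Qed.

Lemma cconv_ext u w l : (forall n, u n = w n) -> cconv u l -> cconv w l.
Proof. intros E; apply cconv_ext_ev; exists 0%nat; auto. Qed.

Lemma cconv_unique u l m : cconv u l -> cconv u m -> l = m.
Proof.
  intros [HRe HIm] [HRe' HIm'].
  apply is_lim_seq_unique in HRe, HIm, HRe', HIm'.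
  apply C_ext; [rewrite HRe in HRe'; injection HRe' | rewrite HIm in HIm'; injection HIm']; auto.
Qed.

Lemma cconv_eq_limit u l l' : cconv u l -> l = l' -> cconv u l'.
Proof. intros Hu <-; exact Hu. Qed.

Lemma cconv_eps u l : cconv u l <->
  forall eps, 0 < eps -> exists N, forall n, (N <= n)%nat -> Cnorm2 (Csub (u n) l) < eps.
Proof.
  unfold cconv; rewrite <- !is_lim_seq_spec; unfold is_lim_seq'; split.
  - intros [HRe HIm] eps Heps.
    assert (Hs : 0 < sqrt (eps / 2)) by (apply sqrt_lt_R0; lra).
    destruct (HRe (mkposreal _ Hs)) as [N1 H1], (HIm (mkposreal _ Hs)) as [N2 H2].
    exists (Nat.max N1 N2); intros n Hn; simpl in *.
    specialize (H1 n ltac:(lia)); specialize (H2 n ltac:(lia)).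
    pose proof (sqrt_sqrt (eps / 2) ltac:(lra)).
    assert (Hsq : forall x, Rabs x < sqrt (eps / 2) -> x * x < eps / 2)
      by (intros x Hx; pose proof (Rabs_pos x);
          assert (x * x = Rabs x * Rabs x)
            by (rewrite <- Rabs_mult; symmetry; apply Rabs_right; nra); nra).
    unfold Cnorm2; simpl; pose proof (Hsq _ H1); pose proof (Hsq _ H2); lra.
  - intros H; split; intros [eps Heps]; simpl;
      destruct (H (eps * eps) ltac:(nra)) as [N HN]; exists N; intros n Hn;
      specialize (HN n Hn); unfold Cnorm2 in HN; simpl in HN;
      pose proof (Rle_0_sqr (Re (u n) + - Re l)); pose proof (Rle_0_sqr (Im (u n) + - Im l));
      unfold Rsqr in *; apply Rabs_def1; nra.
Qed.

Lemma cconv_eventually_neq0 u l :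
  cconv u l -> l <> C0 -> exists N, forall n, (N <= n)%nat -> u n <> C0.
Proof.
  intros Hu Hl; pose proof (Cnorm2_pos l Hl).
  rewrite cconv_eps in Hu; destruct (Hu (Cnorm2 l / 4) ltac:(lra)) as [N HN].
  exists N; intros n Hn E; specialize (HN n Hn); rewrite E in HN.
  unfold Cnorm2 in *; simpl in *; nra.
Qed.

Lemma cconv_pow_inv0 u k : cconv (fun n => Cpow (u n) (S k)) C0 -> cconv u C0.
Proof.
  assert (Hsub0 : forall z, Csub z C0 = z) by (intros; field).
  rewrite !cconv_eps; intros H eps Heps.
  destruct (H (eps ^ S k) ltac:(apply pow_lt; lra)) as [N HN]; exists N; intros n Hn.
  specialize (HN n Hn); rewrite Hsub0, Cnorm2_pow in *.
  apply Rnot_le_lt; intro Hle; assert (eps ^ S k <= Cnorm2 (u n) ^ S k) by (apply pow_incr; lra); lra.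
Qed.

Lemma vconv_iff u l : vconv u l <->
  cconv (fun n => v1 (u n)) (v1 l) /\ cconv (fun n => v2 (u n)) (v2 l) /\
  cconv (fun n => v3 (u n)) (v3 l) /\ cconv (fun n => v4 (u n)) (v4 l).
Proof.
  unfold vconv; rewrite !cconv_eps; split.
  - intros H; repeat split; intros eps Heps; destruct (H eps Heps) as [N HN];
      exists N; intros n Hn; specialize (HN n Hn); rewrite vnorm2_sub in HN;
      pose proof (Cnorm2_nonneg (Csub (v1 (u n)) (v1 l)));
      pose proof (Cnorm2_nonneg (Csub (v2 (u n)) (v2 l)));
      pose proof (Cnorm2_nonneg (Csub (v3 (u n)) (v3 l)));
      pose proof (Cnorm2_nonneg (Csub (v4 (u n)) (v4 l))); lra.
  - intros [H1 [H2 [H3 H4]]] eps Heps.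
    destruct (H1 (eps / 4) ltac:(lra)) as [N1 K1], (H2 (eps / 4) ltac:(lra)) as [N2 K2],
      (H3 (eps / 4) ltac:(lra)) as [N3 K3], (H4 (eps / 4) ltac:(lra)) as [N4 K4].
    exists (Nat.max (Nat.max N1 N2) (Nat.max N3 N4)); intros n Hn.
    specialize (K1 n ltac:(lia)); specialize (K2 n ltac:(lia));
      specialize (K3 n ltac:(lia)); specialize (K4 n ltac:(lia)).
    rewrite vnorm2_sub; lra.
Qed.

Definition crd (k : nat) (x : V4) : C :=
  match k with 0 => v1 x | 1 => v2 x | 2 => v3 x | _ => v4 x end.

Lemma crd_lincomb k al be x y :
  crd k (vadd (vscale al x) (vscale be y)) = Cadd (Cmul al (crd k x)) (Cmul be (crd k y)).
Proof. destruct k as [| [| [|]]]; reflexivity. Qed.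

Lemma V4_ext_crd x y : (forall k, crd k x = crd k y) -> x = y.
Proof.
  intros H; apply V4_ext; [apply (H 0%nat) | apply (H 1%nat) | apply (H 2%nat) | apply (H 3%nat)].
Qed.

Lemma vconv_crd u l k : vconv u l -> cconv (fun n => crd k (u n)) (crd k l).
Proof. rewrite vconv_iff; intros [H1 [H2 [H3 H4]]]; destruct k as [| [| [|]]]; assumption. Qed.

Ltac climit :=
  eapply cconv_eq_limit;
  [ repeat first [ eassumption | apply cconv_const | apply cconv_add | apply cconv_opp
                 | apply cconv_mul | apply cconv_pow | apply vconv_crd; eassumption ]
  | cbn [Cpow]; field ].

Ltac vsplit :=
  apply vconv_iff; cbn [v1 v2 v3 v4 vadd vsub vscale V0 e1]; refine (conj _ (conj _ (conj _ _))).

Definition inv_nat_seq (n : nat) : C := RtoC (/ INR (S n)).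

Lemma inv_nat_seq_neq0 n : inv_nat_seq n <> C0.
Proof.
  intro E; apply (f_equal Re) in E; simpl in E.
  apply (Rinv_neq_0_compat (INR (S n))), E; apply not_0_INR; discriminate.
Qed.

Lemma inv_nat_seq_cconv : cconv inv_nat_seq C0.
Proof.
  split; simpl; [| apply is_lim_seq_const].
  apply (is_lim_seq_incr_1 (fun n => / INR n) 0).
  replace (Finite 0) with (Rbar_inv p_infty) by reflexivity.
  apply is_lim_seq_inv; [apply is_lim_seq_INR | discriminate].
Qed.

(** * Limits of planes *)

Definition minor (e f : V4) (i j : nat) : C :=
  Csub (Cmul (crd i e) (crd j f)) (Cmul (crd j e) (crd i f)).

Lemma lin_indep2_minor_neq0 e f : lin_indep2 e f -> exists i j, minor e f i j <> C0.
Proof.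
  intros Hind; apply NNPP; intro Hall.
  assert (M0 : forall i j, minor e f i j = C0)
    by (intros i j; apply NNPP; intro M; apply Hall; exists i, j; exact M).
  destruct (classic (exists i, crd i e <> C0)) as [[i Hi] | He].
  - destruct (Hind (crd i f) (Copp (crd i e))) as [_ Hb].
    + apply V4_ext_crd; intro k; rewrite crd_lincomb.
      specialize (M0 i k); unfold minor in M0.
      transitivity (Copp (Csub (Cmul (crd i e) (crd k f)) (Cmul (crd k e) (crd i f)))); [field |].
      rewrite M0; destruct k as [| [| [|]]]; cbn; field.
    + apply Hi; replace (crd i e) with (Copp (Copp (crd i e))) by field; rewrite Hb; field.
  - assert (E : e = V0).
    { apply V4_ext_crd; intro k; apply NNPP; intro Hk; apply He; exists k.
      destruct k as [| [| [|]]]; exact Hk. }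
    destruct (Hind C1 C0) as [H1 _]; [subst e; vfield | exact (C1_neq_C0 H1)].
Qed.

Lemma in_span2_coord_l P Q w al be i j :
  w = vadd (vscale al P) (vscale be Q) -> minor P Q i j <> C0 ->
  al = Cmul (minor w Q i j) (Cinv (minor P Q i j)).
Proof.
  intros -> HD.
  replace (minor (vadd (vscale al P) (vscale be Q)) Q i j) with (Cmul al (minor P Q i j))
    by (unfold minor; rewrite !crd_lincomb; field).
  field; exact HD.
Qed.

Lemma in_span2_coord_r P Q w al be i j :
  w = vadd (vscale al P) (vscale be Q) -> minor P Q i j <> C0 ->
  be = Cmul (minor P w i j) (Cinv (minor P Q i j)).
Proof.
  intros -> HD.
  replace (minor P (vadd (vscale al P) (vscale be Q)) i j) with (Cmul be (minor P Q i j))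
    by (unfold minor; rewrite !crd_lincomb; field).
  field; exact HD.
Qed.

(* Cramer's rule on a 2x2 minor of the limit basis, nonzero from some rank on, gives the
   coordinates of [w n] as convergent sequences. *)
Lemma in_span2_limit (P Q w : nat -> V4) e f z :
  (forall n, in_span2 (P n) (Q n) (w n)) -> vconv P e -> vconv Q f -> vconv w z ->
  lin_indep2 e f -> in_span2 e f z.
Proof.
  intros Hspan HP HQ Hw Hind.
  destruct (lin_indep2_minor_neq0 e f Hind) as [i [j HD]].
  assert (HDn : cconv (fun n => minor (P n) (Q n) i j) (minor e f i j)) by (unfold minor; climit).
  destruct (cconv_eventually_neq0 _ _ HDn HD) as [N HN].
  set (al := fun n => Cmul (minor (w n) (Q n) i j) (Cinv (minor (P n) (Q n) i j))).
  set (be := fun n => Cmul (minor (P n) (w n) i j) (Cinv (minor (P n) (Q n) i j))).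
  assert (Hal : cconv al (Cmul (minor z f i j) (Cinv (minor e f i j)))).
  { apply cconv_mul; [unfold minor; climit | apply cconv_inv; assumption]. }
  assert (Hbe : cconv be (Cmul (minor e z i j) (Cinv (minor e f i j)))).
  { apply cconv_mul; [unfold minor; climit | apply cconv_inv; assumption]. }
  exists (Cmul (minor z f i j) (Cinv (minor e f i j))), (Cmul (minor e z i j) (Cinv (minor e f i j))).
  apply V4_ext_crd; intro k; rewrite crd_lincomb.
  apply (cconv_unique (fun n => crd k (w n))); [apply vconv_crd; assumption |].
  apply cconv_ext_ev with (fun n => Cadd (Cmul (al n) (crd k (P n))) (Cmul (be n) (crd k (Q n))));
    [| climit; exact HD].
  exists N; intros n Hn; destruct (Hspan n) as [a [b Hab]].
  unfold al, be.
  rewrite <- (in_span2_coord_l _ _ _ _ _ _ _ Hab (HN n Hn)),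
    <- (in_span2_coord_r _ _ _ _ _ _ _ Hab (HN n Hn)), Hab, crd_lincomb.
  reflexivity.
Qed.

(** * Partial derivatives and tangent planes *)

Definition lim0 (F : C -> V4) (d : V4) : Prop :=
  forall eps, 0 < eps -> exists delta, 0 < delta /\
    forall h, h <> C0 -> Cnorm2 h < delta -> vnorm2 (vsub (F h) d) < eps.

Lemma vsub_eq0 x y : vsub x y = V0 -> x = y.
Proof. intros E; transitivity (vadd (vsub x y) y); [vfield | rewrite E; vfield]. Qed.

Lemma lim0_unique F d1 d2 : lim0 F d1 -> lim0 F d2 -> d1 = d2.
Proof.
  intros H1 H2; apply vsub_eq0, vnorm2_eq0.
  apply Rle_antisym; [| apply vnorm2_nonneg]; apply Rnot_lt_le; intro Hpos.
  set (D := vnorm2 (vsub d1 d2)) in *.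
  destruct (H1 (D / 4) ltac:(lra)) as [r1 [Hr1 K1]], (H2 (D / 4) ltac:(lra)) as [r2 [Hr2 K2]].
  set (r := Rmin (1 / 2) (Rmin r1 r2)).
  assert (Hr : 0 < r /\ r <= 1 / 2 /\ r <= r1 /\ r <= r2).
  { unfold r; repeat split; try apply Rmin_glb_lt; try apply Rmin_glb_lt; try lra;
      pose proof (Rmin_l (1 / 2) (Rmin r1 r2)); pose proof (Rmin_r (1 / 2) (Rmin r1 r2));
      pose proof (Rmin_l r1 r2); pose proof (Rmin_r r1 r2); lra. }
  assert (Hh : RtoC r <> C0) by (apply RtoC_neq0; lra).
  assert (Hnh : Cnorm2 (RtoC r) = r * r) by (unfold Cnorm2; simpl; ring).
  specialize (K1 (RtoC r) Hh ltac:(nra)); specialize (K2 (RtoC r) Hh ltac:(nra)).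
  set (F' := F (RtoC r)) in *.
  assert (Hsplit : vsub d1 d2 = vadd (vsub F' d2) (vscale (Copp C1) (vsub F' d1))) by vfield.
  pose proof (vnorm2_add (vsub F' d2) (vscale (Copp C1) (vsub F' d1))) as Htri.
  rewrite vnorm2_scale, <- Hsplit in Htri.
  replace (Cnorm2 (Copp C1)) with 1 in Htri by (unfold Cnorm2; simpl; ring).
  unfold D in *; lra.
Qed.

Definition cbounded0 (g : C -> C) : Prop :=
  exists M, forall h, Cnorm2 h < 1 -> Cnorm2 (g h) <= M.

Definition vbounded0 (q : C -> V4) : Prop :=
  exists M, forall h, Cnorm2 h < 1 -> vnorm2 (q h) <= M.

Lemma cbounded0_const c : cbounded0 (fun _ => c).
Proof. exists (Cnorm2 c); intros; lra. Qed.

Lemma cbounded0_id : cbounded0 (fun h => h).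
Proof. exists 1; intros; lra. Qed.

Lemma cbounded0_add g1 g2 : cbounded0 g1 -> cbounded0 g2 -> cbounded0 (fun h => Cadd (g1 h) (g2 h)).
Proof.
  intros [M1 H1] [M2 H2]; exists (2 * M1 + 2 * M2); intros h Hh.
  pose proof (Cnorm2_add (g1 h) (g2 h)); specialize (H1 h Hh); specialize (H2 h Hh); lra.
Qed.

Lemma cbounded0_mul g1 g2 : cbounded0 g1 -> cbounded0 g2 -> cbounded0 (fun h => Cmul (g1 h) (g2 h)).
Proof.
  intros [M1 H1] [M2 H2]; exists (M1 * M2); intros h Hh; rewrite Cnorm2_mul.
  apply Rmult_le_compat; auto using Cnorm2_nonneg.
Qed.

Lemma vbounded0_intro q :
  cbounded0 (fun h => v1 (q h)) -> cbounded0 (fun h => v2 (q h)) ->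
  cbounded0 (fun h => v3 (q h)) -> cbounded0 (fun h => v4 (q h)) -> vbounded0 q.
Proof.
  intros [M1 H1] [M2 H2] [M3 H3] [M4 H4]; exists (M1 + M2 + M3 + M4); intros h Hh.
  specialize (H1 h Hh); specialize (H2 h Hh); specialize (H3 h Hh); specialize (H4 h Hh).
  unfold vnorm2; lra.
Qed.

(* Remainder in [(t + h)^(k+1) = t^(k+1) + h ((k+1) t^k + h pow_rem k t h)]. *)
Fixpoint pow_rem (k : nat) (t h : C) : C :=
  match k with
  | O => C0
  | S k => Cadd (Cmul (Cadd t h) (pow_rem k t h)) (Cmul (Cnat (S k)) (Cpow t k))
  end.

Lemma Cpow_add_expansion t h k :
  Cpow (Cadd t h) (S k) =
  Cadd (Cpow t (S k)) (Cmul h (Cadd (Cmul (Cnat (S k)) (Cpow t k)) (Cmul h (pow_rem k t h)))).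
Proof.
  induction k as [| k IH].
  - change (Cnat 1) with C1; cbn [Cpow pow_rem]; field.
  - change (Cpow (Cadd t h) (S (S k))) with (Cmul (Cadd t h) (Cpow (Cadd t h) (S k))).
    rewrite IH, (Cnat_S (S k)); cbn [Cpow pow_rem]; field.
Qed.

Lemma cbounded0_pow_rem k t : cbounded0 (fun h => pow_rem k t h).
Proof.
  induction k as [| k IH]; cbn [pow_rem]; [apply cbounded0_const |].
  apply cbounded0_add; [apply cbounded0_mul; [apply cbounded0_add |] | ];
    auto using cbounded0_const, cbounded0_id.
Qed.

Ltac bounded0 :=
  apply vbounded0_intro; cbn [v1 v2 v3 v4];
  repeat first [ apply cbounded0_pow_rem | apply cbounded0_const | apply cbounded0_id
               | apply cbounded0_add | apply cbounded0_mul ].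

Lemma lim0_of_expansion (F : C -> V4) d q :
  (forall h, h <> C0 -> F h = vadd d (vscale h (q h))) -> vbounded0 q -> lim0 F d.
Proof.
  intros HF [M HM] eps Heps.
  assert (M0 : 0 <= M).
  { specialize (HM C0 ltac:(unfold Cnorm2; simpl; lra)); pose proof (vnorm2_nonneg (q C0)); lra. }
  exists (Rmin 1 (eps / (M + 1))); split.
  - apply Rmin_glb_lt; [lra | apply Rdiv_lt_0_compat; lra].
  - intros h Hh Hd; pose proof (Rmin_l 1 (eps / (M + 1))); pose proof (Rmin_r 1 (eps / (M + 1))).
    replace (vsub (F h) d) with (vscale h (q h)) by (rewrite HF by exact Hh; vfield).
    rewrite vnorm2_scale; specialize (HM h ltac:(lra)).
    pose proof (Cnorm2_nonneg h); pose proof (vnorm2_nonneg (q h)).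
    assert (Cnorm2 h * (M + 1) < eps).
    { replace eps with (eps / (M + 1) * (M + 1)) by (field; lra).
      apply Rmult_lt_compat_r; lra. }
    nra.
Qed.

Lemma has_pderiv_a_of_expansion phi a t d q :
  (forall h, vsub (phi (Cadd a h) t) (phi a t) = vscale h (vadd d (vscale h (q h)))) ->
  vbounded0 q -> has_pderiv_a phi a t d.
Proof.
  intros E; apply lim0_of_expansion; intros h Hh.
  rewrite E; vfield; exact Hh.
Qed.

Lemma has_pderiv_t_of_expansion phi a t d q :
  (forall h, vsub (phi a (Cadd t h)) (phi a t) = vscale h (vadd d (vscale h (q h)))) ->
  vbounded0 q -> has_pderiv_t phi a t d.
Proof.
  intros E; apply lim0_of_expansion; intros h Hh.
  rewrite E; vfield; exact Hh.
Qed.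

Lemma tangent_plane_span2 phi a t da dt :
  has_pderiv_a phi a t da -> has_pderiv_t phi a t dt ->
  forall z, tangent_plane phi a t z <-> in_span2 da dt z.
Proof.
  intros Ha Ht z; split.
  - intros [da' [dt' [Ha' [Ht' Hz]]]].
    rewrite (lim0_unique _ _ _ Ha Ha'), (lim0_unique _ _ _ Ht Ht'); exact Hz.
  - intros Hz; exists da, dt; auto.
Qed.

Lemma in_span2_lincomb e f x y al be :
  in_span2 e f x -> in_span2 e f y -> in_span2 e f (vadd (vscale al x) (vscale be y)).
Proof.
  intros [a1 [b1 ->]] [a2 [b2 ->]].
  exists (Cadd (Cmul al a1) (Cmul be a2)), (Cadd (Cmul al b1) (Cmul be b2)); vfield.
Qed.

Lemma in_span2_scale_r e f s z : s <> C0 -> in_span2 e (vscale s f) z <-> in_span2 e f z.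
Proof.
  intros Hs; split; intros [al [be ->]].
  - exists al, (Cmul be s); vfield.
  - exists al, (Cmul be (Cinv s)); vfield; exact Hs.
Qed.

(** * Whitney regularity of S *)

Definition phiS_da (t : C) : V4 := mkV4 C1 C0 (Cpow t 6) C0.
Definition phiS_dt (a t : C) : V4 :=
  mkV4 C0 (Cmul (Cnat 4) (Cpow t 3)) (Cmul a (Cmul (Cnat 6) (Cpow t 5))) (Cmul (Cnat 7) (Cpow t 6)).

Lemma phiS_pderiv_a a t : has_pderiv_a phiS a t (phiS_da t).
Proof.
  apply (has_pderiv_a_of_expansion _ _ _ _ (fun _ => V0)); [| bounded0].
  intro h; unfold phiS, phiS_da; vfield.
Qed.

Lemma phiS_pderiv_t a t : has_pderiv_t phiS a t (phiS_dt a t).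
Proof.
  apply (has_pderiv_t_of_expansion _ _ _ _
    (fun h => mkV4 C0 (pow_rem 3 t h) (Cmul a (pow_rem 5 t h)) (pow_rem 6 t h))); [| bounded0].
  intro h; unfold phiS, phiS_dt; rewrite !Cpow_add_expansion; vfield.
Qed.

Lemma phiS_limit_plane (a t : nat -> C) (P Q : nat -> V4) a0 e f :
  cconv a a0 -> cconv t C0 -> (forall n, t n <> C0) -> lin_indep2 e f ->
  (forall n z, tangent_plane phiS (a n) (t n) z <-> in_span2 (P n) (Q n) z) ->
  vconv P e -> vconv Q f ->
  in_span2 e f e1 /\ in_span2 e f (mkV4 C0 (Cnat 4) C0 C0).
Proof.
  intros Ha Ht Htnz Hind Htan HP HQ.
  assert (Hspan : forall n z, in_span2 (phiS_da (t n)) (phiS_dt (a n) (t n)) z -> in_span2 (P n) (Q n) z).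
  { intros n z Hz; apply Htan.
    apply (tangent_plane_span2 _ _ _ _ _ (phiS_pderiv_a _ _) (phiS_pderiv_t _ _)), Hz. }
  split.
  - apply (in_span2_limit P Q (fun n => phiS_da (t n))); auto.
    + intros n; apply Hspan; exists C1, C0; vfield.
    + unfold phiS_da; vsplit; climit.
  - apply (in_span2_limit P Q (fun n => vscale (Cinv (Cpow (t n) 3)) (phiS_dt (a n) (t n)))); auto.
    + intros n; apply Hspan; exists C0, (Cinv (Cpow (t n) 3)); vfield; apply Htnz.
    + unfold phiS_dt; vsplit.
      * apply (cconv_ext (fun _ => C0)); [| apply cconv_const].
        intro n; cbn [Cpow]; field; apply Htnz.
      * apply (cconv_ext (fun _ => Cnat 4)); [| apply cconv_const].
        intro n; cbn [Cpow]; field; apply Htnz.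
      * apply (cconv_ext (fun n => Cmul (a n) (Cmul (Cnat 6) (Cpow (t n) 2)))); [| climit].
        intro n; cbn [Cpow]; field; apply Htnz.
      * apply (cconv_ext (fun n => Cmul (Cnat 7) (Cpow (t n) 3))); [| climit].
        intro n; cbn [Cpow]; field; apply Htnz.
Qed.

(* The last two coordinates of a secant are its second one times a_n t_n^2, resp. t_n^3. *)
Lemma phiS_secant_limit (a t c : nat -> C) (y : nat -> V4) a0 v :
  cconv a a0 -> cconv t C0 -> (forall n, on_axis (y n)) ->
  vconv (fun n => vscale (c n) (vsub (phiS (a n) (t n)) (y n))) v ->
  v3 v = C0 /\ v4 v = C0.
Proof.
  intros Ha Ht Hy Hsec.
  apply vconv_iff in Hsec as [_ [Hs2 [Hs3 Hs4]]].
  set (s2 := fun n => v2 (vscale (c n) (vsub (phiS (a n) (t n)) (y n)))) in Hs2.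
  split.
  - apply (cconv_unique _ _ _ Hs3).
    apply (cconv_ext (fun n => Cmul (s2 n) (Cmul (a n) (Cpow (t n) 2)))); [| climit].
    intro n; destruct (Hy n) as [y2 [y3 _]].
    unfold s2; cbn [v2 v3 vscale vsub vadd phiS]; rewrite y2, y3; cbn [Cpow]; field.
  - apply (cconv_unique _ _ _ Hs4).
    apply (cconv_ext (fun n => Cmul (s2 n) (Cpow (t n) 3))); [| climit].
    intro n; destruct (Hy n) as [y2 [_ y4]].
    unfold s2; cbn [v2 v4 vscale vsub vadd phiS]; rewrite y2, y4; cbn [Cpow]; field.
Qed.

Lemma whitney_phiS : whitney_along_axis phiS.
Proof.
  intros p [p2 _] a t y c v e f P Q Hoff Hy Hx _ _ Hsec Hind Htan HP HQ.
  apply vconv_iff in Hx as [Ha [Ht4 _]]; cbn [v1 v2 phiS] in Ha, Ht4; rewrite p2 in Ht4.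
  pose proof (cconv_pow_inv0 t 3 Ht4) as Ht.
  assert (Htnz : forall n, t n <> C0).
  { intros n E; apply (Hoff n); unfold on_axis, phiS; cbn [v2 v3 v4]; rewrite E;
      repeat split; cbn [Cpow]; field. }
  destruct (phiS_limit_plane a t P Q (v1 p) e f Ha Ht Htnz Hind Htan HP HQ) as [He1 He2].
  destruct (phiS_secant_limit a t c y (v1 p) v Ha Ht (fun n => proj1 (Hy n)) Hsec) as [Hv3 Hv4].
  split; [exact He1 |].
  replace v with (vadd (vscale (v1 v) e1) (vscale (Cmul (v2 v) (Cinv (Cnat 4))) (mkV4 C0 (Cnat 4) C0 C0))).
  - apply in_span2_lincomb; assumption.
  - destruct v as [w1 w2 w3 w4]; cbn in Hv3, Hv4; subst.
    vfield; apply Cnat_neq0; discriminate.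
Qed.

(** * The family containing the blow-up and the Nash modification *)

Definition phi_ab (al be a t : C) : V4 :=
  mkV4 a (Cpow t 4) (Cmul al (Cmul a (Cpow t 2))) (Cmul be (Cpow t 3)).

Definition phi_ab_da (al t : C) : V4 := mkV4 C1 C0 (Cmul al (Cpow t 2)) C0.
Definition phi_ab_dt (al be a t : C) : V4 :=
  mkV4 C0 (Cmul (Cnat 4) (Cpow t 3)) (Cmul al (Cmul a (Cmul (Cnat 2) (Cpow t 1))))
    (Cmul be (Cmul (Cnat 3) (Cpow t 2))).

Lemma phi_ab_pderiv_a al be a t : has_pderiv_a (phi_ab al be) a t (phi_ab_da al t).
Proof.
  apply (has_pderiv_a_of_expansion _ _ _ _ (fun _ => V0)); [| bounded0].
  intro h; unfold phi_ab, phi_ab_da; vfield.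
Qed.

Lemma phi_ab_pderiv_t al be a t : has_pderiv_t (phi_ab al be) a t (phi_ab_dt al be a t).
Proof.
  apply (has_pderiv_t_of_expansion _ _ _ _
    (fun h => mkV4 C0 (pow_rem 3 t h) (Cmul al (Cmul a (pow_rem 1 t h))) (Cmul be (pow_rem 2 t h))));
    [| bounded0].
  intro h; unfold phi_ab, phi_ab_dt; rewrite !Cpow_add_expansion; vfield.
Qed.

Lemma lin_indep2_e1 f : v1 f = C0 -> v3 f <> C0 -> lin_indep2 e1 f.
Proof.
  intros Hf1 Hf3 x w E.
  pose proof (f_equal v1 E) as E1; pose proof (f_equal v3 E) as E3.
  cbn [v1 v3 vadd vscale e1 V0] in E1, E3; rewrite Hf1 in E1.
  assert (Hx : x = C0) by (rewrite <- E1; field).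
  split; [exact Hx |].
  rewrite Hx in E3; destruct (Cmul_eq0 w (v3 f)) as [Hw | Hw]; [rewrite <- E3; field | exact Hw |].
  contradiction.
Qed.

Lemma not_in_span2_e1 al be :
  al <> C0 -> be <> C0 ->
  ~ in_span2 e1 (mkV4 C0 C0 (Cmul al (Cnat 2)) (Cmul be (Cnat 3))) (mkV4 C0 C0 al be).
Proof.
  intros Hal Hbe [x [y E]].
  pose proof (f_equal v3 E) as E3; pose proof (f_equal v4 E) as E4.
  cbn [v3 v4 vadd vscale e1] in E3, E4.
  assert (H2 : Cmul y (Cnat 2) = C1).
  { transitivity (Cmul (Cadd (Cmul x C0) (Cmul y (Cmul al (Cnat 2)))) (Cinv al)); [field; exact Hal |].
    rewrite <- E3; field; exact Hal. }
  assert (H3 : Cmul y (Cnat 3) = C1).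
  { transitivity (Cmul (Cadd (Cmul x C0) (Cmul y (Cmul be (Cnat 3)))) (Cinv be)); [field; exact Hbe |].
    rewrite <- E4; field; exact Hbe. }
  assert (Hy : y = C0).
  { transitivity (Csub (Cmul y (Cnat 3)) (Cmul y (Cnat 2))); [rewrite (Cnat_S 2); field |].
    rewrite H2, H3; field. }
  apply C1_neq_C0; rewrite <- H2, Hy; field.
Qed.

Section FamilyCounterexample.

Variables al be : C.
Hypotheses (Hal : al <> C0) (Hbe : be <> C0).

Let t := inv_nat_seq.
Let y (n : nat) : V4 := mkV4 (t n) C0 C0 C0.
Let P (n : nat) : V4 := phi_ab_da al (t n).
Let Q (n : nat) : V4 := vscale (Cinv (Cpow (t n) 2)) (phi_ab_dt al be (t n) (t n)).
Let f : V4 := mkV4 C0 C0 (Cmul al (Cnat 2)) (Cmul be (Cnat 3)).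

Lemma phi_ab_tangent_bases n z :
  tangent_plane (phi_ab al be) (t n) (t n) z <-> in_span2 (P n) (Q n) z.
Proof.
  rewrite (tangent_plane_span2 _ _ _ _ _ (phi_ab_pderiv_a _ _ _ _) (phi_ab_pderiv_t _ _ _ _)).
  unfold Q; rewrite in_span2_scale_r; [reflexivity |].
  apply Cinv_neq0, Cpow_neq0, inv_nat_seq_neq0.
Qed.

Lemma phi_ab_tangent_limits : vconv P e1 /\ vconv Q f /\ lin_indep2 e1 f.
Proof.
  pose proof inv_nat_seq_cconv as Ht; pose proof inv_nat_seq_neq0 as Htnz.
  split; [| split].
  - unfold P, phi_ab_da, e1; vsplit; climit.
  - unfold Q, phi_ab_dt, f; vsplit.
    + apply (cconv_ext (fun _ => C0)); [| apply cconv_const].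
      intro n; cbn [Cpow]; field; apply Htnz.
    + apply (cconv_ext (fun n => Cmul (Cnat 4) (t n))); [| climit].
      intro n; cbn [Cpow]; field; apply Htnz.
    + apply (cconv_ext (fun _ => Cmul al (Cnat 2))); [| apply cconv_const].
      intro n; cbn [Cpow]; field; apply Htnz.
    + apply (cconv_ext (fun _ => Cmul be (Cnat 3))); [| apply cconv_const].
      intro n; cbn [Cpow]; field; apply Htnz.
  - apply lin_indep2_e1; [reflexivity |].
    intros E; destruct (Cmul_eq0 _ _ E) as [Hal0 | H2]; [contradiction |].
    exact (Cnat_neq0 2 ltac:(discriminate) H2).
Qed.

Lemma phi_ab_secant_limit :
  vconv (fun n => vscale (Cinv (Cpow (t n) 3)) (vsub (phi_ab al be (t n) (t n)) (y n)))
    (mkV4 C0 C0 al be).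
Proof.
  pose proof inv_nat_seq_cconv as Ht; pose proof inv_nat_seq_neq0 as Htnz.
  unfold phi_ab, y; vsplit.
  - apply (cconv_ext (fun _ => C0)); [| apply cconv_const].
    intro n; cbn [Cpow]; field; apply Htnz.
  - apply (cconv_ext t); [| exact Ht].
    intro n; cbn [Cpow]; field; apply Htnz.
  - apply (cconv_ext (fun _ => al)); [| apply cconv_const].
    intro n; cbn [Cpow]; field; apply Htnz.
  - apply (cconv_ext (fun _ => be)); [| apply cconv_const].
    intro n; cbn [Cpow]; field; apply Htnz.
Qed.

Lemma phi_ab_not_whitney : ~ whitney_along_axis (phi_ab al be).
Proof.
  pose proof inv_nat_seq_cconv as Ht; pose proof inv_nat_seq_neq0 as Htnz.
  destruct phi_ab_tangent_limits as [HP [HQ Hind]].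
  intros W; apply (not_in_span2_e1 al be Hal Hbe).
  refine (proj2 (W V0 _ t t y (fun n => Cinv (Cpow (t n) 3)) _ e1 f P Q _ _ _ _ _
    phi_ab_secant_limit Hind phi_ab_tangent_bases HP HQ)).
  - repeat split.
  - intros n [H4 _]; apply (Cpow_neq0 (t n) 4 (Htnz n)), H4.
  - intros n; split; [repeat split |].
    intro E; apply (Htnz n); exact (f_equal v1 E).
  - unfold phi_ab; vsplit; climit.
  - unfold y; vsplit; climit.
  - intro E; apply Hal; exact (f_equal v3 E).
Qed.

End FamilyCounterexample.

Theorem mainTheorem11 :
  whitney_along_axis phiS /\
  ~ whitney_along_axis phiTau /\
  ~ whitney_along_axis phiSigma.
Proof.
  assert (Etau : phiTau = phi_ab C1 C1).
  { do 2 (apply functional_extensionality; intro); unfold phiTau, phi_ab; vfield. }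
  assert (Esigma : phiSigma = phi_ab (RtoC (3 / 2)) (RtoC (7 / 4))).
  { do 2 (apply functional_extensionality; intro); unfold phiSigma, phi_ab; vfield. }
  split; [exact whitney_phiS |].
  rewrite Etau, Esigma.
  split; apply phi_ab_not_whitney; (exact C1_neq_C0 || apply RtoC_neq0; lra).
Qed.
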